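(* Let $G$ be a graph whose twin graph $G^*$, with its vertex types, is one of the following: (G7) $G^*$ is $K_4-e$ with a pendant edge attached to one of its degree-3 vertices (so $G^*$ has one vertex of degree 4, one of degree 3, two of degree 2 and one leaf), where the leaf is of type (1), the degree-4 and degree-3 vertices are of type (1K), one of the degree-2 vertices is of type (K) and the other is of type (1); (G8) $G^*$ is $K_4-e$, one of its degree-2 vertices is of type (K), the other is of type (1), one of its degree-3 vertices is of type (N), and the other is of type (1K); (G9) $G^*$ is $C_4$, two adjacent vertices are of type (K) and the other two are of type (1); (G10) $G^*$ is $C_4+K_1$, two adjacent degree-3 vertices are of type (K), the degree-4 vertex is of type (1K), and the other two vertices are of type (1). Then $D(G)\neq n(G)-2$.
   Context: All graphs are finite and simple; $n(G)=|V(G)|$; $N_G(u)$ is the neighborhood of $u$; $K_4-e$ is $K_4$ with one edge deleted; $C_4$ is the 4-cycle, and the join $G+H$ is obtained from the disjoint union of $G$ and $H$ by adding all edges between $V(G)$ and $V(H)$. A distinguishing coloring of a graph $G$ is a (not necessarily proper) vertex coloring such that the only automorphism of $G$ mapping every vertex to a vertex of the same color is the identity; the distinguishing number $D(G)$ is the minimum number of colors in a distinguishing coloring of $G$. Two distinct vertices $u,v$ are twins if $N_G(u)\setminus\{v\}=N_G(v)\setminus\{u\}$. The relation $u\equiv v$ iff $u=v$ or $u,v$ are twins is an equivalence relation; the class of $v$ is denoted $v^*$. The twin graph $G^*$ has the equivalence classes as vertices, distinct classes $u^*,v^*$ being adjacent iff $uv\in E(G)$. Each class induces a complete or an edgeless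 graph. A class $v^*$ is of type (1) if $|v^*|=1$, of type (K) if $|v^*|\ge 2$ and it induces a complete graph, and of type (N) if $|v^*|\ge2$ and it induces an edgeless graph; type (1K) means type (1) or (K), type (1N) means (1) or (N), and type (KN) means (K) or (N). *)

(* Finite simple graphs as symmetric irreflexive relations. *)
From mathcomp Require Import all_boot.
From mathcomp Require Import perm fingroup.
Set Implicit Arguments. Unset Strict Implicit. Unset Printing Implicit Defensive.

Section Graphs.
Variable T : finType.
Variable e : rel T.

Definition is_aut (s : {perm T}) : bool :=
  [forall x, forall y, e (s x) (s y) == e x y].

Definition distinguishing k (c : {ffun T -> 'I_k}) : bool :=
  [forall s : {perm T}, (is_aut s && [forall x, c (s x) == c x]) ==> (s == 1%g)].

Definition has_dist_col (k : nat) : bool :=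
  [exists c : {ffun T -> 'I_k}, distinguishing c].

Lemma has_dist_col_card : has_dist_col #|T|.
Proof.
apply/existsP; exists [ffun x => enum_rank x].
apply/forallP=> s; apply/implyP=> /andP[_ /forallP Hs].
apply/eqP/permP=> x; rewrite perm1.
by have /eqP := Hs x; rewrite !ffunE => /enum_rank_inj.
Qed.

Lemma has_dist_col_ex : exists k, has_dist_col k.
Proof. by exists #|T|; exact: has_dist_col_card. Qed.

Definition dist_number : nat := ex_minn has_dist_col_ex.

Definition twins (u v : T) : bool :=
  (u != v) && [forall w, (e u w && (w != v)) == (e v w && (w != u))].

Definition twin_equiv (u v : T) : bool := (u == v) || twins u v.

Definition twin_class (v : T) : {set T} := [set u | twin_equiv v u].

Definition twin_classes : {set {set T}} := [set twin_class v | v in T].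

Definition twin_adj (A B : {set T}) : bool :=
  (A != B) && [exists u in A, exists v in B, e u v].

Inductive vtype := T1 | TK | TN | T1K | T1N | TKN.

Definition is_type1 (A : {set T}) : bool := #|A| == 1.
Definition is_typeK (A : {set T}) : bool :=
  (2 <= #|A|) && [forall u in A, forall v in A, (u != v) ==> e u v].
Definition is_typeN (A : {set T}) : bool :=
  (2 <= #|A|) && [forall u in A, forall v in A, ~~ e u v].

Definition has_type (A : {set T}) (t : vtype) : bool :=
  match t with
  | T1 => is_type1 A
  | TK => is_typeK A
  | TN => is_typeN A
  | T1K => is_type1 A || is_typeK A
  | T1N => is_type1 A || is_typeN A
  | TKN => is_typeK A || is_typeN A
  end.

Definition twin_graph_is (m : nat) (H : rel 'I_m) (typs : seq vtype) : Prop :=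
  exists f : 'I_m -> {set T},
    [/\ injective f,
        forall i, f i \in twin_classes,
        forall A, A \in twin_classes -> exists i, f i = A,
        forall i j, twin_adj (f i) (f j) = H i j
      & forall i, has_type (f i) (nth T1 typs i)].

End Graphs.

Definition edges_rel (m : nat) (es : seq (nat * nat)) : rel 'I_m :=
  fun i j => ((val i, val j) \in es) || ((val j, val i) \in es).

(* K4 - e on {0,1,2,3}: 0,1 of degree 3, 2,3 of degree 2; plus a leaf 4 at 0 *)
Definition G7_graph : rel 'I_5 :=
  @edges_rel 5 [:: (0,1); (0,2); (0,3); (1,2); (1,3); (0,4)].
Definition G7_types : seq vtype := [:: T1K; T1K; TK; T1; T1].

(* K4 - e: 0,1 of degree 3 and 2,3 of degree 2 *)
Definition G8_graph : rel 'I_4 :=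
  @edges_rel 4 [:: (0,1); (0,2); (0,3); (1,2); (1,3)].
Definition G8_types : seq vtype := [:: TN; T1K; TK; T1].

Definition G9_graph : rel 'I_4 :=
  @edges_rel 4 [:: (0,1); (1,2); (2,3); (3,0)].
Definition G9_types : seq vtype := [:: TK; TK; T1; T1].

(* C4 + K1: cycle 0-1-2-3-0, vertex 4 adjacent to all *)
Definition G10_graph : rel 'I_5 :=
  @edges_rel 5 [:: (0,1); (1,2); (2,3); (3,0); (0,4); (1,4); (2,4); (3,4)].
Definition G10_types : seq vtype := [:: TK; TK; T1; T1; T1K].

From mathcomp Require Import all_boot perm fingroup zify.
Set Implicit Arguments. Unset Strict Implicit. Unset Printing Implicit Defensive.

(* Colour each twin class injectively by the positions of its vertices in the
   class, except that the vertex w forming a class of type (1) gets colour 1.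
   A colour-preserving automorphism s must fix w, as otherwise s w would be the
   only vertex of its class and get colour 0.  Hence s induces an automorphism
   of G^* fixing w^* and respecting the types of the classes; for each of the
   four twin graphs such an automorphism is the identity, which is checked by
   enumerating the permutations of G^*.  So s stabilises every class, on which
   the colouring is injective, and s = 1.  As G^* has at least four vertices,
   every class has at most n - 3 vertices, and n - 3 >= 2 because of the class
   of type (K); so D(G) <= n - 3 < n - 2. *)

Section TwinClasses.
Variables (T : finType) (e : rel T).
Hypotheses (e_sym : symmetric e) (e_irr : irreflexive e).

Lemma twinsE u v :
  twins e u v = (u != v) && [forall x, [&& x != u & x != v] ==> (e u x == e v x)].
Proof.
rewrite /twins; case: eqVneq => //= neq_uv; apply: eq_forallb => x.
case: (eqVneq x u) => [->|_]; first by rewrite e_irr andbF.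
by case: (eqVneq x v) => [->|_]; rewrite ?e_irr ?andbF ?andbT.
Qed.

Lemma twin_equiv_refl v : twin_equiv e v v.
Proof. by rewrite /twin_equiv eqxx. Qed.

Lemma twin_equiv_sym u v : twin_equiv e u v = twin_equiv e v u.
Proof.
rewrite /twin_equiv !twinsE [v == u]eq_sym; congr (_ || (_ && _)).
by apply: eq_forallb => x; rewrite andbC (eq_sym (e v x)).
Qed.

Lemma twin_equiv_trans u v w :
  twin_equiv e u v -> twin_equiv e v w -> twin_equiv e u w.
Proof.
move=> /orP[/eqP-> //|tw_uv] /orP[/eqP<-|tw_vw]; first by rewrite /twin_equiv tw_uv orbT.
case: (eqVneq u w) => [->|neq_uw]; first exact: twin_equiv_refl.
apply/orP; right; move: tw_uv tw_vw; rewrite !twinsE neq_uw.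
move=> /andP[neq_uv /forallP Euv] /andP[neq_vw /forallP Evw].
have E1 x : x != u -> x != v -> e u x = e v x.
  by move=> xu xv; apply/eqP/(implyP (Euv x)); rewrite xu xv.
have E2 x : x != v -> x != w -> e v x = e w x.
  by move=> xv xw; apply/eqP/(implyP (Evw x)); rewrite xv xw.
apply/forallP => x; apply/implyP => /andP[xu xw]; apply/eqP.
case: (eqVneq x v) => [->|xv]; last by rewrite E1 ?E2.
(* [e u v = e v u = e w u = e u w = e v w = e w v], using [E2] at [u] and [E1] at [w]. *)
rewrite (e_sym u v) E2 // (e_sym w u) E1 1?eq_sym //; exact: e_sym.
Qed.

Lemma twin_equiv_equivalence : equivalence_rel (twin_equiv e).
Proof.
move=> x y z; split=> [|Rxy]; first exact: twin_equiv_refl.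
apply/idP/idP; last exact: twin_equiv_trans.
by apply: twin_equiv_trans; rewrite twin_equiv_sym.
Qed.

Lemma mem_twin_class v : v \in twin_class e v.
Proof. by rewrite inE twin_equiv_refl. Qed.

Lemma twin_class_eq u v : u \in twin_class e v -> twin_class e u = twin_class e v.
Proof.
by rewrite inE => Rvu; apply/setP => x; rewrite !inE (twin_equiv_equivalence v u x).2.
Qed.

Lemma twin_classes_partition : partition (twin_classes e) [set: T].
Proof.
have -> : twin_classes e = equivalence_partition (twin_equiv e) [set: T].
  apply/setP => A; apply/imsetP/imsetP => -[v _ ->];
    by exists v => //; apply/setP => u; rewrite !inE.
exact: (equivalence_partitionP (in3W twin_equiv_equivalence)).
Qed.

Lemma card_twin_class_le x : #|twin_class e x| + #|twin_classes e| <= #|T| + 1.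
Proof.
set C := twin_class e x; set P := twin_classes e.
have C_P : C \in P by apply: imset_f.
have others : #|P :\ C| <= \sum_(A in P :\ C) #|A|.
  rewrite -sum1_card; apply: leq_sum => A /setD1P[_ /imsetP[v _ ->]].
  by rewrite card_gt0; apply/set0Pn; exists v; apply: mem_twin_class.
rewrite -cardsT (card_partition twin_classes_partition) (big_setD1 _ C_P).
by rewrite (cardsD1 C P) C_P -addnA leq_add2l add1n addn1 ltnS.
Qed.
End TwinClasses.

Lemma forall_in_imset (aT rT : finType) (f : aT -> rT) (A : {set aT}) (P : pred rT) :
  [forall y in f @: A, P y] = [forall x in A, P (f x)].
Proof.
apply/forall_inP/forall_inP => [PfA x xA | PA _ /imsetP[x xA ->]]; last exact: PA.
by apply: PfA; apply: imset_f.
Qed.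

Lemma exists_in_imset (aT rT : finType) (f : aT -> rT) (A : {set aT}) (P : pred rT) :
  [exists y in f @: A, P y] = [exists x in A, P (f x)].
Proof.
apply/exists_inP/exists_inP => [[_ /imsetP[x xA ->] Pfx] | [x xA Pfx]]; first by exists x.
by exists (f x); rewrite ?imset_f.
Qed.

Section Automorphisms.
Variables (T : finType) (e : rel T) (s : {perm T}).
Hypothesis s_aut : is_aut e s.

Lemma is_autE x y : e (s x) (s y) = e x y.
Proof. by apply/eqP; move/forallP/(_ x)/forallP: s_aut. Qed.

Lemma is_aut_inv : is_aut e s^-1.
Proof. by apply/forallP => x; apply/forallP => y; rewrite -is_autE !permKV. Qed.

Lemma twins_aut u v : twins e u v -> twins e (s u) (s v).
Proof.
move=> /andP[neq_uv /forallP Nuv]; rewrite /twins (inj_eq perm_inj) neq_uv.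
by apply/forallP => w; rewrite -(permKV s w) !is_autE !(inj_eq perm_inj).
Qed.

End Automorphisms.

Section AutomorphismInvariance.
Variables (T : finType) (e : rel T) (s : {perm T}).
Hypothesis s_aut : is_aut e s.

Lemma twin_equiv_aut u v : twin_equiv e (s u) (s v) = twin_equiv e u v.
Proof.
suff equiv_aut r x y : is_aut e r -> twin_equiv e x y -> twin_equiv e (r x) (r y).
  apply/idP/idP; last exact: equiv_aut.
  by move/(equiv_aut _ _ _ (is_aut_inv s_aut)); rewrite !permK.
by move=> r_aut /orP[/eqP-> | /(twins_aut r_aut) tw]; rewrite /twin_equiv ?eqxx ?tw ?orbT.
Qed.

Lemma twin_class_aut v : twin_class e (s v) = s @: twin_class e v.
Proof.
apply/setP => y; rewrite -[y](permKV s) mem_imset ?inE ?twin_equiv_aut //.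
exact: perm_inj.
Qed.

Lemma twin_adj_aut (A B : {set T}) : twin_adj e (s @: A) (s @: B) = twin_adj e A B.
Proof.
rewrite /twin_adj (inj_eq (imset_inj perm_inj)) exists_in_imset; congr (_ && _).
apply: eq_existsb => u; rewrite exists_in_imset; congr (_ && _).
by apply: eq_existsb => v; rewrite is_autE.
Qed.

Lemma is_typeK_aut (A : {set T}) : is_typeK e (s @: A) = is_typeK e A.
Proof.
rewrite /is_typeK (card_imset _ perm_inj) forall_in_imset; congr (_ && _).
apply: eq_forallb => u; rewrite forall_in_imset; congr (_ ==> _).
by apply: eq_forallb => v; rewrite (inj_eq perm_inj) is_autE.
Qed.

End AutomorphismInvariance.

(* The basic types (1), (K), (N) are encoded as 0, 1, 2. *)
Definition type_kinds (t : vtype) : seq nat :=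
  match t with
  | T1 => [:: 0] | TK => [:: 1] | TN => [:: 2]
  | T1K => [:: 0; 1] | T1N => [:: 0; 2] | TKN => [:: 1; 2]
  end.

Definition compatible_types (t t' : vtype) : bool := has (mem (type_kinds t)) (type_kinds t').

Section ClassKinds.
Variables (T : finType) (e : rel T).

Definition class_kind (A : {set T}) : nat :=
  if is_type1 A then 0 else if is_typeK e A then 1 else 2.

Lemma class_kind1 A : is_type1 A -> class_kind A = 0.
Proof. by rewrite /class_kind => ->. Qed.

Lemma class_kindK A : is_typeK e A -> class_kind A = 1.
Proof. by rewrite /class_kind /is_type1 => /[dup] /andP[/gtn_eqF-> _] ->. Qed.

Lemma class_kindN A : is_typeN e A -> class_kind A = 2.
Proof.
rewrite /class_kind /is_type1 => /andP[A_gt1 /forall_inP noedge].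
rewrite gtn_eqF //=; case: ifP => // /andP[_ /forall_inP clique].
have [u [v [uA vA neq_uv]]] := card_gt1P A_gt1.
have /forall_inP/(_ v vA) := noedge u uA.
by have /forall_inP/(_ v vA)/implyP/(_ neq_uv) -> := clique u uA.
Qed.

Lemma class_kind_type A t : has_type e A t -> class_kind A \in type_kinds t.
Proof.
by case: t => /= [/class_kind1-> | /class_kindK-> | /class_kindN->
  | /orP[/class_kind1-> | /class_kindK->] | /orP[/class_kind1-> | /class_kindN->]
  | /orP[/class_kindK-> | /class_kindN->]].
Qed.

Lemma class_kind_aut (s : {perm T}) (A : {set T}) :
  is_aut e s -> class_kind (s @: A) = class_kind A.
Proof. by move=> s_aut; rewrite /class_kind /is_type1 (card_imset _ perm_inj) is_typeK_aut. Qed.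

End ClassKinds.

Lemma dist_number_le (T : finType) (e : rel T) k : has_dist_col e k -> dist_number e <= k.
Proof. by rewrite /dist_number; case: ex_minnP => n _; apply. Qed.

Section TwinColoring.
Variables (T : finType) (e : rel T).
Hypotheses (e_sym : symmetric e) (e_irr : irreflexive e).

Lemma has_dist_col_twin_rigid k w :
  1 < k -> (forall x, #|twin_class e x| <= k) -> twin_class e w = [set w] ->
  (forall s x, is_aut e s -> s w = w -> s x \in twin_class e x) ->
  has_dist_col e k.
Proof.
case: k => // k k_gt1 class_le w_single aut_in_class.
pose col x := if x == w then 1 else index x (enum (twin_class e x)).
have col_lt x : col x < k.+1.
  rewrite /col; case: eqP => // _; apply: leq_trans (class_le x).
  by rewrite cardE index_mem mem_enum mem_twin_class.
have col_inj x y : y \in twin_class e x -> col x = col y -> x = y.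
  move=> y_x; have class_y := twin_class_eq e_sym e_irr y_x.
  have x_y : x \in twin_class e y by rewrite class_y mem_twin_class.
  rewrite /col class_y.
  case: (eqVneq x w) => [xw | _]; first by move: y_x; rewrite xw w_single inE => /eqP.
  case: (eqVneq y w) => [yw | _]; first by move: x_y; rewrite yw w_single inE => /eqP.
  by apply: (index_inj x); rewrite mem_enum ?mem_twin_class.
apply/existsP; exists [ffun x => Ordinal (col_lt x)].
apply/forallP => s; apply/implyP => /andP[s_aut /forallP same_col].
have col_s x : col (s x) = col x by have /eqP/(congr1 val) := same_col x; rewrite !ffunE.
have sw : s w = w.
  move: (col_s w); rewrite /col eqxx twin_class_aut // w_single imset_set1 enum_set1 /=.
  by rewrite eqxx; case: eqP.
apply/eqP/permP => x; rewrite perm1; apply/esym/col_inj; last exact/esym/col_s.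
exact: aut_in_class.
Qed.

End TwinColoring.

Definition rigid_typed_graph m (H : rel 'I_m) (typs : seq vtype) (i0 : 'I_m) : Prop :=
  forall g : 'I_m -> 'I_m, injective g -> {mono g : i j / H i j} -> g i0 = i0 ->
    (forall i : 'I_m, compatible_types (nth T1 typs i) (nth T1 typs (g i))) -> g =1 id.

Section TwinGraphIso.
Variables (T : finType) (e : rel T) (m : nat) (H : rel 'I_m) (typs : seq vtype).
Variable f : 'I_m -> {set T}.
Hypotheses (e_sym : symmetric e) (e_irr : irreflexive e).
Hypotheses (f_inj : injective f) (f_class : forall i, f i \in twin_classes e).
Hypothesis f_onto : forall A, A \in twin_classes e -> exists i, f i = A.
Hypothesis f_adj : forall i j, twin_adj e (f i) (f j) = H i j.
Hypothesis f_type : forall i, has_type e (f i) (nth T1 typs i).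

Lemma card_twin_classes_iso : #|twin_classes e| = m.
Proof.
have -> : twin_classes e = f @: setT.
  apply/setP => A; apply/idP/imsetP => [/f_onto[i <-] | [i _ ->]]; last exact: f_class.
  by exists i.
by rewrite card_imset // cardsT card_ord.
Qed.

Lemma twin_class_singleton i w : f i = [set w] -> twin_class e w = [set w].
Proof.
move=> fi; have /imsetP[v _ fv] := f_class i.
have w_v : w \in twin_class e v by rewrite -fv fi set11.
by rewrite (twin_class_eq e_sym e_irr w_v) -fv.
Qed.

Lemma aut_twin_graph s : is_aut e s ->
  exists g : 'I_m -> 'I_m,
    [/\ injective g, {mono g : i j / H i j},
        forall i : 'I_m, compatible_types (nth T1 typs i) (nth T1 typs (g i))
      & forall i, s @: f i = f (g i)].
Proof.
move=> s_aut.
have [g gE] : exists g : 'I_m -> 'I_m, forall i, s @: f i = f (g i).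
  apply: (@fin_all_exists _ (fun=> 'I_m) (fun i j => s @: f i = f j)) => i.
  have /imsetP[v _ fv] := f_class i.
  have [j fj] : exists j, f j = s @: f i by apply: f_onto; rewrite fv -twin_class_aut ?imset_f.
  by exists j.
exists g; split=> // [i j gij | i j | i].
- by apply: f_inj; apply: (imset_inj (@perm_inj _ s)); rewrite !gE gij.
- by rewrite -!f_adj -!gE twin_adj_aut.
apply/hasP; exists (class_kind e (f i)); last exact: class_kind_type.
by rewrite -(class_kind_aut _ s_aut) gE class_kind_type.
Qed.

Lemma aut_in_twin_class i0 w :
  rigid_typed_graph H typs i0 -> f i0 = [set w] ->
  forall s x, is_aut e s -> s w = w -> s x \in twin_class e x.
Proof.
move=> rigid f_i0 s x s_aut sw.
have [g [g_inj g_mono g_compat gE]] := aut_twin_graph s_aut.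
have g_id : g =1 id.
  by apply: rigid => //; apply: f_inj; rewrite -gE f_i0 imset_set1 sw.
have [i fi] : exists i, f i = twin_class e x by apply/f_onto/imsetP; exists x.
by rewrite -fi -{1}(g_id i) -gE imset_f // fi mem_twin_class.
Qed.

End TwinGraphIso.

Lemma dist_number_lt_rigid_twin_graph (T : finType) (e : rel T) m (H : rel 'I_m) typs
    (i0 i1 : 'I_m) :
  symmetric e -> irreflexive e -> twin_graph_is e H typs -> 4 <= m ->
  nth T1 typs i0 = T1 -> nth T1 typs i1 = TK -> rigid_typed_graph H typs i0 ->
  dist_number e < #|T| - 2.
Proof.
move=> e_sym e_irr [f [f_inj f_class f_onto f_adj f_type]] m_ge4 i0_T1 i1_TK rigid.
have [w f_i0] : exists w, f i0 = [set w] by apply/cards1P; move: (f_type i0); rewrite i0_T1.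
have class_le x : #|twin_class e x| <= #|T| - 3.
  have := card_twin_class_le e_sym e_irr x.
  by rewrite (card_twin_classes_iso f_inj f_class f_onto); lia.
have T_ge5 : 5 <= #|T|.
  have /imsetP[v _ fv] := f_class i1.
  by move: (f_type i1) (class_le v); rewrite i1_TK fv => /andP[]; lia.
have col : has_dist_col e (#|T| - 3).
  apply: (has_dist_col_twin_rigid e_sym e_irr (w := w)) => //; first lia.
    exact: twin_class_singleton f_i0.
  exact: (aut_in_twin_class f_inj f_class f_onto f_adj f_type rigid f_i0).
by have := dist_number_le col; lia.
Qed.

(* [edges_rel es i j] is convertible to [edges_nat es i j]. *)
Definition edges_nat (es : seq (nat * nat)) (a b : nat) : bool :=
  ((a, b) \in es) || ((b, a) \in es).

(* A bijection g of 'I_m is encoded by the list of its values, a permutation of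
   [iota 0 m]. *)
Definition rigid_check m (es : seq (nat * nat)) (typs : seq vtype) (i0 : nat) : bool :=
  all (fun l =>
    [&& all (fun i => all (fun j =>
            edges_nat es (nth 0 l i) (nth 0 l j) == edges_nat es i j) (iota 0 m)) (iota 0 m),
        nth 0 l i0 == i0
      & all (fun i => compatible_types (nth T1 typs i) (nth T1 typs (nth 0 l i))) (iota 0 m)]
    ==> (l == iota 0 m))
  (permutations (iota 0 m)).

Lemma rigid_checkP m es typs (i0 : 'I_m) :
  rigid_check m es typs i0 -> rigid_typed_graph (edges_rel es) typs i0.
Proof.
move=> check g g_inj g_mono g_i0 g_compat.
set l := [seq val (g i) | i <- enum 'I_m].
have nth_l (i : 'I_m) : nth 0 l i = g i.
  by rewrite (nth_map i) ?size_enum_ord // nth_ord_enum.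
have l_perm : l \in permutations (iota 0 m).
  rewrite mem_permutations -val_enum_ord /l (map_comp val g); apply: perm_map.
  apply: uniq_perm => [||i]; rewrite ?map_inj_uniq -?enumT ?enum_uniq //.
  have [g' _ gK'] := injF_bij g_inj.
  by rewrite mem_enum; apply/mapP; exists (g' i); rewrite ?mem_enum ?gK'.
have /eqP l_id : l == iota 0 m.
  apply: (implyP (allP check l l_perm)); apply/and3P; split.
  - rewrite -val_enum_ord all_map; apply/allP => i _ /=.
    by rewrite all_map; apply/allP => j _ /=; rewrite !nth_l; apply/eqP/g_mono.
  - by rewrite nth_l g_i0.
  - by rewrite -val_enum_ord all_map; apply/allP => i _ /=; rewrite nth_l.
by move=> i; apply: val_inj; rewrite /= -nth_l l_id nth_iota.
Qed.

Theorem lemma4p10 (T : finType) (e : rel T) :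
  symmetric e -> irreflexive e ->
  [\/ twin_graph_is e G7_graph G7_types,
      twin_graph_is e G8_graph G8_types,
      twin_graph_is e G9_graph G9_types
    | twin_graph_is e G10_graph G10_types] ->
  dist_number e <> #|T| - 2.
Proof.
move=> e_sym e_irr G_cases; apply/eqP; rewrite ltn_eqF //.
case: G_cases => G_iso;
  [ apply: (dist_number_lt_rigid_twin_graph (i0 := inord 3) (i1 := inord 2) e_sym e_irr G_iso)
  | apply: (dist_number_lt_rigid_twin_graph (i0 := inord 3) (i1 := inord 2) e_sym e_irr G_iso)
  | apply: (dist_number_lt_rigid_twin_graph (i0 := inord 3) (i1 := inord 0) e_sym e_irr G_iso)
  | apply: (dist_number_lt_rigid_twin_graph (i0 := inord 3) (i1 := inord 0) e_sym e_irr G_iso) ];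
  rewrite ?inordK //; apply: rigid_checkP; rewrite inordK //; vm_compute.
Qed.
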